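(* Let $C_1,C_2$ be compatible counting-star formulas and let $E\wedge H$ be a derivation result of $S_{\{1\}}(C_1)*S_{\{2\}}(C_2)$. Then $E\wedge H\Rightarrow S_{\{1\}}(C_1)*S_{\{2\}}(C_2)$ is valid (true in every $L'$-environment).
   Context: BASE. Fix a finite vocabulary $L=\mathcal A\cup\mathcal F$ ($\mathcal A$ unary, $\mathcal F$ binary predicate symbols); equality is a logical symbol not in $\mathcal F$, always interpreted as identity. Formulas: first-order logic with equality, counting quantifiers $\exists^{\ge k}x.G$, $\exists^{=k}x.G$, and spatial conjunction $*$. An environment has a finite nonempty domain $D$, interpretations of the predicate symbols, and an assignment to variables. $\mathrm{split}\,e\,[e_1,\dots,e_r]$ (same domain, same variable assignment) holds iff for each predicate symbol $P$, $e(P)$ is the disjoint union of the $e_i(P)$; $[\![G_1*G_2]\!]e$ holds iff some $e_1,e_2$ with $\mathrm{split}\,e\,[e_1,e_2]$ satisfy $[\![G_1]\!]e_1$, $[\![G_2]\!]e_2$. $G\sim H$ means equal truth values in all environments. NORMAL FORMS. Atoms over distinct variables $u_1,\dots,u_p$ are $A(u_i)$, $f(u_i,u_j)$, $u_i=u_j$; a GCCAT formula over them contains for each such atom exactly one of the atom or its negation (nothing else), with $u_i=u_j$ positive iff $i=j$. Fix distinct $x_1,\dots,x_n$ and $x$. $\mathrm{ext}(x_1,\dots,x_n;x)$ is the set of conjunctions containing, for each atom over $x,x_1,\dots,x_n$ containing $x$, exactly one of the atom or its negation, with $x=x$ positive and $x=x_i$, $x_i=x$ negated. For $p\ge1$,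 $C_p=\{0,\dots,p-1,p^+\}$; $\exists^{c}x.G$ means $\exists^{=c}x.G$ for integer $c$ and $\exists^{\ge p}x.G$ for $c=p^+$. A counting-star formula is $C=E\wedge F\wedge\bigwedge_{i=1}^{k}\exists^{s_i}x.F'_i$ with $E=\bigwedge_{j=1}^m y_j=x_{i_j}$ ($y_j$ distinct variables not among $x,x_1,\dots,x_n$), $F$ GCCAT over $x_1,\dots,x_n$, $F'_1,\dots,F'_k$ an enumeration of $\mathrm{ext}(x_1,\dots,x_n;x)$, $s_i\in C_q$ for some $q\ge2$. Two counting-star formulas are compatible if they have the same equality part $E$ and GCCAT parts $F_1,F_2$ over the same $x_1,\dots,x_n$. OPERATIONS. $\mathrm{Pos}(T)$ is the set of non-equality positive literals of a conjunction $T$. For $T_1,T_2\in\mathrm{ext}(x_1,\dots,x_n;x)$, $T_1\oplus T_2$ is defined iff $\mathrm{Pos}(T_1)\cap\mathrm{Pos}(T_2)=\emptyset$ and is the unique $T\in\mathrm{ext}$ with $\mathrm{Pos}(T)=\mathrm{Pos}(T_1)\cup\mathrm{Pos}(T_2)$; for GCCAT $F_1,F_2$ over $x_1,\dots,x_n$, $F_1\otimes F_2$ is defined iff $\mathrm{Pos}(F_1)\cap\mathrm{Pos}(F_2)=\emptyset$ and is the unique GCCAT $F$ over $x_1,\dots,x_n$ with $\mathrm{Pos}(F)=\mathrm{Pos}(F_1)\cup\mathrm{Pos}(F_2)$. TRANSLATION. $L'=L\cup\{B_1,B_2\}$ (new unary symbols, split by $*$ like all others). $\mathrm{Mark}_\emptyset(x)=\neg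 B_1(x)\wedge\neg B_2(x)$, $\mathrm{Mark}_{\{1\}}(x)=B_1(x)\wedge\neg B_2(x)$, $\mathrm{Mark}_{\{2\}}(x)=\neg B_1(x)\wedge B_2(x)$, $\mathrm{Mark}_{\{1,2\}}(x)=B_1(x)\wedge B_2(x)$. $\mathcal E_0$: GCCAT over $x_1,\dots,x_n$ whose only positive literals are $x_i=x_i$; $\varnothing_x$: element of $\mathrm{ext}$ whose only positive literal is $x=x$; $\delta(x):=\bigwedge_i x\ne x_i$. $G_E:=\mathcal E_0\wedge\forall x.(\delta(x)\to\varnothing_x\wedge\mathrm{Mark}_\emptyset(x))$; $K(F):=F\wedge\forall x.(\delta(x)\to\varnothing_x\wedge\mathrm{Mark}_\emptyset(x))$; $\mathrm{Any}_m(T):=\mathcal E_0\wedge\forall x.(\delta(x)\to(T\wedge\mathrm{Mark}_m(x))\vee(\varnothing_x\wedge\mathrm{Mark}_\emptyset(x)))$; $\mathrm{One}_m(T):=\mathrm{Any}_m(T)\wedge\exists^{=1}x.(\delta(x)\wedge T\wedge\mathrm{Mark}_m(x))$. $X_m(\exists^{0}x.T):=G_E$, $X_m(\exists^{i+1}x.T):=\mathrm{One}_m(T)*X_m(\exists^{i}x.T)$, $X_m(\exists^{p^+}x.T):=X_m(\exists^{p}x.T)*\mathrm{Any}_m(T)$. $S_m(C):=E\wedge\big(K(F)*X_m(\exists^{s_1}x.F'_1)*\dots*X_m(\exists^{s_k}x.F'_k)\big)$. RULES (when $T_1\oplus T_2$ is defined): (1) $\mathrm{One}_{\{1\}}(T_1)*\mathrm{One}_{\{2\}}(T_2)\to\mathrm{One}_{\{1,2\}}(T_1\oplus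 T_2)$; (2) $\mathrm{One}_{\{1\}}(T_1)*\mathrm{Any}_{\{2\}}(T_2)\to\mathrm{One}_{\{1,2\}}(T_1\oplus T_2)*\mathrm{Any}_{\{2\}}(T_2)$; (3) $\mathrm{Any}_{\{1\}}(T_1)*\mathrm{One}_{\{2\}}(T_2)\to\mathrm{Any}_{\{1\}}(T_1)*\mathrm{One}_{\{1,2\}}(T_1\oplus T_2)$; (4) $\mathrm{Any}_{\{1\}}(T_1)*\mathrm{Any}_{\{2\}}(T_2)\to\mathrm{Any}_{\{1\}}(T_1)*\mathrm{Any}_{\{2\}}(T_2)*\mathrm{Any}_{\{1,2\}}(T_1\oplus T_2)$; (5) $\mathrm{Any}_{\{1\}}(T)\to G_E$; (6) $\mathrm{Any}_{\{2\}}(T)\to G_E$. DERIVATION. For compatible $C_1=E\wedge F_1\wedge\dots$, $C_2=E\wedge F_2\wedge\dots$, write $S_{\{1\}}(C_1)*S_{\{2\}}(C_2)$ as $E\wedge W$ where $W$ is the spatial conjunction of $K(F_1)$, $K(F_2)$ and all the (unfolded) $\mathrm{One}_m$, $\mathrm{Any}_m$, $G_E$ conjuncts of the $X_{\{1\}}$ and $X_{\{2\}}$ parts. $E\wedge H$ is a derivation result if $H$ is obtained from $W$ by: first replacing $K(F_1)*K(F_2)$ by $K(F_1\otimes F_2)$ if defined, and by $\mathit{false}$ otherwise; then applying finitely many rule instances of (1)–(6), each replacing a spatial sub-conjunction matching a rule's left side by its right side, working modulo associativity and commutativity of $*$, the unit law $G*G_E\sim G$ and idempotence $\mathrm{Any}_m(T)*\mathrm{Any}_m(T)\sim\mathrm{Any}_m(T)$,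 with all applications of (1)–(4) preceding those of (5)–(6); and such that in the end, apart from the $K$-conjunct, $H$ contains only conjuncts of the forms $\mathrm{One}_{\{1,2\}}(T)$ and $\mathrm{Any}_{\{1,2\}}(T)$. *)

From mathcomp Require Import all_boot.

Set Implicit Arguments.
Unset Strict Implicit.
Unset Printing Implicit Defensive.

Inductive form (U Bn : Type) : Type :=
| FTrue | FFalse
| FU (a : U) (v : nat)
| FB (f : Bn) (v w : nat)
| FEq (v w : nat)
| FNot (g : form U Bn)
| FAnd (g h : form U Bn)
| FOr (g h : form U Bn)
| FImp (g h : form U Bn)
| FEx (v : nat) (g : form U Bn)
| FAll (v : nat) (g : form U Bn)
| FCntGe (k : nat) (v : nat) (g : form U Bn)
| FCntEq (k : nat) (v : nat) (g : form U Bn)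
| FStar (g h : form U Bn).

Arguments FTrue {U Bn}.
Arguments FFalse {U Bn}.
Arguments FU {U Bn} a v.
Arguments FB {U Bn} f v w.
Arguments FEq {U Bn} v w.
Arguments FNot {U Bn} g.
Arguments FAnd {U Bn} g h.
Arguments FOr {U Bn} g h.
Arguments FImp {U Bn} g h.
Arguments FEx {U Bn} v g.
Arguments FAll {U Bn} v g.
Arguments FCntGe {U Bn} k v g.
Arguments FCntEq {U Bn} k v g.
Arguments FStar {U Bn} g h.

Section Semantics.
Variables (U Bn D : finType).

Definition interp : finType :=
  ({ffun (U * D)%type -> bool} * {ffun (Bn * D * D)%type -> bool})%type.

Definition upd (s : nat -> D) (v : nat) (d : D) : nat -> D :=
  fun w => if w == v then d else s w.

Definition split2 (I I1 I2 : interp) : bool :=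
  [forall p, (I.1 p == (I1.1 p || I2.1 p)) && ~~ (I1.1 p && I2.1 p)] &&
  [forall p, (I.2 p == (I1.2 p || I2.2 p)) && ~~ (I1.2 p && I2.2 p)].

Fixpoint sat (I : interp) (s : nat -> D) (G : form U Bn) {struct G} : bool :=
  match G with
  | FTrue => true
  | FFalse => false
  | FU a v => I.1 (a, s v)
  | FB f v w => I.2 (f, s v, s w)
  | FEq v w => s v == s w
  | FNot g => ~~ sat I s g
  | FAnd g h => sat I s g && sat I s h
  | FOr g h => sat I s g || sat I s h
  | FImp g h => sat I s g ==> sat I s h
  | FEx v g => [exists d : D, sat I (upd s v d) g]
  | FAll v g => [forall d : D, sat I (upd s v d) g]
  | FCntGe k v g => k <= #|[set d : D | sat I (upd s v d) g]|
  | FCntEq k v g => #|[set d : D | sat I (upd s v d) g]| == k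
  | FStar g h => [exists I1 : interp, exists I2 : interp,
                    [&& split2 I I1 I2, sat I1 s g & sat I2 s h]]
  end.

End Semantics.

Definition valid (U Bn : finType) (phi : form U Bn) : Prop :=
  forall (D : finType), 0 < #|D| ->
    forall (I : interp U Bn D) (s : nat -> D), sat I s phi.

(* A = unary symbols of L, Bn = binary symbols of L;
   L' has unary symbols A + bool, with B_1 = inr false, B_2 = inr true. *)
Section Translation.
Variables (A Bn : finType) (n : nat) (xs : n.-tuple nat) (x : nat).

Local Notation fm := (form (A + bool) Bn).

Definition gatom : finType := ((A * 'I_n) + (Bn * 'I_n * 'I_n))%type.
(* atoms over x, x_1..x_n containing x, other than equalities:
   A(x) | f(x,x) | f(x,x_i) | f(x_i,x) *)
Definition xatom : finType := (A + (Bn + ((Bn * 'I_n) + (Bn * 'I_n))))%type.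

Definition gatom_form (t : gatom) : fm :=
  match t with
  | inl (a, i) => FU (inl a) (tnth xs i)
  | inr (f, i, j) => FB f (tnth xs i) (tnth xs j)
  end.

Definition xatom_form (t : xatom) : fm :=
  match t with
  | inl a => FU (inl a) x
  | inr (inl f) => FB f x x
  | inr (inr (inl (f, i))) => FB f x (tnth xs i)
  | inr (inr (inr (f, i))) => FB f (tnth xs i) x
  end.

Definition lit (b : bool) (g : fm) : fm := if b then g else FNot g.
Definition bigAnd (l : seq fm) : fm := foldr FAnd FTrue l.

Definition ipair : finType := ('I_n * 'I_n)%type.

(* the GCCAT formula over x_1..x_n whose set of positive non-equality
   literals is P *)
Definition gccat (P : {set gatom}) : fm :=
  bigAnd ([seq lit (t \in P) (gatom_form t) | t <- enum gatom] ++
          [seq lit (ij.1 == ij.2) (FEq (tnth xs ij.1) (tnth xs ij.2))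
          | ij <- enum ipair]).

(* the element of ext(x_1..x_n; x) whose set of positive non-equality
   literals is T *)
Definition extf (T : {set xatom}) : fm :=
  bigAnd ([seq lit (t \in T) (xatom_form t) | t <- enum xatom] ++
          [:: FEq x x] ++
          flatten [seq [:: FNot (FEq x (tnth xs i)); FNot (FEq (tnth xs i) x)]
                  | i <- enum 'I_n]).

(* counting values C_q = {0..q-1, q^+} *)
Inductive cval := CEx of nat | CGe of nat.
Definition in_Cq (q : nat) (c : cval) : bool :=
  match c with CEx k => k < q | CGe p => p == q end.

Definition Eform (E : seq (nat * 'I_n)) : fm :=
  bigAnd [seq FEq p.1 (tnth xs p.2) | p <- E].

Definition delta : fm := bigAnd [seq FNot (FEq x (tnth xs i)) | i <- enum 'I_n].

(* m : bool * bool encodes a subset of {1,2} : (1 \in m, 2 \in m) *)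
Definition Mark (m : bool * bool) : fm :=
  FAnd (lit m.1 (FU (inr false) x)) (lit m.2 (FU (inr true) x)).

Definition E0 : fm := gccat set0.
Definition emptyx : fm := extf set0.

Definition GE : fm :=
  FAnd E0 (FAll x (FImp delta (FAnd emptyx (Mark (false, false))))).
Definition Kf (P : {set gatom}) : fm :=
  FAnd (gccat P) (FAll x (FImp delta (FAnd emptyx (Mark (false, false))))).
Definition Anyf (m : bool * bool) (T : {set xatom}) : fm :=
  FAnd E0 (FAll x (FImp delta (FOr (FAnd (extf T) (Mark m))
                                   (FAnd emptyx (Mark (false, false)))))).
Definition Onef (m : bool * bool) (T : {set xatom}) : fm :=
  FAnd (Anyf m T) (FCntEq 1 x (FAnd delta (FAnd (extf T) (Mark m)))).

Fixpoint Xn (m : bool * bool) (T : {set xatom}) (k : nat) : fm :=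
  match k with
  | 0 => GE
  | k'.+1 => FStar (Onef m T) (Xn m T k')
  end.

Definition Xf (m : bool * bool) (T : {set xatom}) (c : cval) : fm :=
  match c with
  | CEx k => Xn m T k
  | CGe p => FStar (Xn m T p) (Anyf m T)
  end.

(* S_m(C) for C = E /\ F /\ /\_T exists^{s T} x. T *)
Definition Sf (m : bool * bool) (E : seq (nat * 'I_n)) (P : {set gatom})
  (s : {ffun {set xatom} -> cval}) : fm :=
  FAnd (Eform E)
       (foldl FStar (Kf P) [seq Xf m T (s T) | T <- enum {set xatom}]).

(* Derivations.  Spatial conjuncts other than the K-conjunct.          *)
Inductive satom := SOne of (bool * bool) & {set xatom}
                 | SAny of (bool * bool) & {set xatom}
                 | SGE.

Definition satom_form (a : satom) : fm :=
  match a with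
  | SOne m T => Onef m T
  | SAny m T => Anyf m T
  | SGE => GE
  end.

Definition unfoldX (m : bool * bool) (T : {set xatom}) (c : cval) : seq satom :=
  match c with
  | CEx k => nseq k (SOne m T) ++ [:: SGE]
  | CGe p => nseq p (SOne m T) ++ [:: SGE; SAny m T]
  end.

Definition W0 (s1 s2 : {ffun {set xatom} -> cval}) : seq satom :=
  flatten [seq unfoldX (true, false) T (s1 T) | T <- enum {set xatom}] ++
  flatten [seq unfoldX (false, true) T (s2 T) | T <- enum {set xatom}].

(* equivalence moves: commutativity/associativity (adjacent swaps),
   unit law G * G_E ~ G, idempotence Any_m(T) * Any_m(T) ~ Any_m(T) *)
Definition equiv_step (l l' : seq satom) : Prop :=
  (exists l1 a b l2, l = l1 ++ a :: b :: l2 /\ l' = l1 ++ b :: a :: l2) \/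
  l' = SGE :: l \/ l = SGE :: l' \/
  (exists m T r, l = SAny m T :: r /\ l' = SAny m T :: SAny m T :: r) \/
  (exists m T r, l' = SAny m T :: r /\ l = SAny m T :: SAny m T :: r).

Definition m1 : bool * bool := (true, false).
Definition m2 : bool * bool := (false, true).
Definition m12 : bool * bool := (true, true).

(* rules (1)-(4); T1 (+) T2 is defined iff Pos(T1), Pos(T2) are disjoint,
   and then Pos(T1 (+) T2) = Pos(T1) :|: Pos(T2) *)
Definition rule14 (lhs rhs : seq satom) : Prop :=
  exists T1 T2 : {set xatom}, [disjoint T1 & T2] /\
  ((lhs = [:: SOne m1 T1; SOne m2 T2] /\ rhs = [:: SOne m12 (T1 :|: T2)]) \/
   (lhs = [:: SOne m1 T1; SAny m2 T2] /\
      rhs = [:: SOne m12 (T1 :|: T2); SAny m2 T2]) \/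
   (lhs = [:: SAny m1 T1; SOne m2 T2] /\
      rhs = [:: SAny m1 T1; SOne m12 (T1 :|: T2)]) \/
   (lhs = [:: SAny m1 T1; SAny m2 T2] /\
      rhs = [:: SAny m1 T1; SAny m2 T2; SAny m12 (T1 :|: T2)])).

Definition rule56 (lhs rhs : seq satom) : Prop :=
  exists T : {set xatom}, (lhs = [:: SAny m1 T] \/ lhs = [:: SAny m2 T]) /\ rhs = [:: SGE].

Definition rewr (rule : seq satom -> seq satom -> Prop) (l l' : seq satom) :=
  exists lhs rhs r, rule lhs rhs /\ l = lhs ++ r /\ l' = rhs ++ r.

Inductive rtc (R : seq satom -> seq satom -> Prop) : seq satom -> seq satom -> Prop :=
| rtc_refl l : rtc R l l
| rtc_step l1 l2 l3 : R l1 l2 -> rtc R l2 l3 -> rtc R l1 l3.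

Definition is_final (a : satom) : bool :=
  match a with
  | SOne m _ => m == m12
  | SAny m _ => m == m12
  | SGE => false
  end.

Definition otimes (P1 P2 : {set gatom}) : option {set gatom} :=
  if [disjoint P1 & P2] then Some (P1 :|: P2) else None.

Definition derivation_result (E : seq (nat * 'I_n))
  (P1 : {set gatom}) (s1 : {ffun {set xatom} -> cval})
  (P2 : {set gatom}) (s2 : {ffun {set xatom} -> cval}) (R : fm) : Prop :=
  exists W1 W2 : seq satom,
    rtc (fun l l' => equiv_step l l' \/ rewr rule14 l l') (W0 s1 s2) W1 /\
    rtc (fun l l' => equiv_step l l' \/ rewr rule56 l l') W1 W2 /\
    all is_final W2 /\
    R = FAnd (Eform E)
             (foldl (fun acc a => FStar acc (satom_form a))
                    (match otimes P1 P2 with Some P => Kf P | None => FFalse end)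
                    W2).

End Translation.

From mathcomp Require Import all_boot.

Set Implicit Arguments.
Unset Strict Implicit.
Unset Printing Implicit Defensive.

(* The formulas built by the translation and by derivations only constrain the
   view of an environment: the atoms at the values of x_1..x_n, and the atoms
   A(d), f(d,d), f(d,x_i), f(x_i,d), B_1(d), B_2(d) at elements d that are not
   values of the x_i.  Once the GCCAT part forces the x_i to take distinct
   values, distinct view atoms are distinct ground atoms, so splitting an
   environment amounts to partitioning its view, and spatial conjunction becomes
   separating conjunction of predicates on finite sets.  At that level every
   rule (1)-(6) and every equivalence move is sound read right to left: an
   element of type T1 (+) T2 marked {1,2} splits into one of type T1 marked {1}
   and one of type T2 marked {2}; Any_m(T) is idempotent and absorbs One_m(T) and
   G_E; and K(F1 (x) F2) splits into K(F1) * K(F2). *)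

Section SeparatingConjunction.
Variable X : finType.
Implicit Types (P Q R : {set X} -> Prop) (v w : {set X}).

Definition sep P Q : {set X} -> Prop :=
  fun v => exists2 v1 : {set X}, v1 \subset v & P v1 /\ Q (v :\: v1).

Definition emp : {set X} -> Prop := eq set0.

Lemma sep_mono P P' Q Q' v : (forall w, P w -> P' w) -> (forall w, Q w -> Q' w) ->
  sep P Q v -> sep P' Q' v.
Proof. by move=> HP HQ [v1 sub1 [/HP ? /HQ ?]]; exists v1. Qed.

Lemma sep_monol P P' Q v : sep P Q v -> (forall w, P w -> P' w) -> sep P' Q v.
Proof. by move=> H HP; apply: sep_mono HP _ H. Qed.

Lemma sep_monor P Q Q' v : sep P Q v -> (forall w, Q w -> Q' w) -> sep P Q' v.
Proof. by move=> H HQ; apply: sep_mono _ HQ H. Qed.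

Lemma setDK_sub v v1 : v1 \subset v -> v :\: (v :\: v1) = v1.
Proof. by move=> sub1; rewrite setDDr setDv set0U; apply/setIidPr. Qed.

Lemma setUD_sub v v1 : v1 \subset v -> v1 :|: (v :\: v1) = v.
Proof.
by move=> sub1; apply/setP=> r; rewrite !inE; case: (boolP (r \in v1)) => // /(subsetP sub1) ->.
Qed.

Lemma sepC P Q v : sep P Q v -> sep Q P v.
Proof. by move=> [v1 sub1 [HP HQ]]; exists (v :\: v1); rewrite ?subsetDl ?setDK_sub. Qed.

Lemma sepA P Q R v : sep (sep P Q) R v -> sep P (sep Q R) v.
Proof.
move=> [v1 sub1 [[v2 sub2 [HP HQ]] HR]]; exists v2; first exact: subset_trans sub1.
split=> //; exists (v1 :\: v2); first exact: setSD.
by rewrite setDDl setUD_sub.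
Qed.

Lemma sepA' P Q R v : sep P (sep Q R) v -> sep (sep P Q) R v.
Proof.
move=> [v1 sub1 [HP [w sub2 [HQ HR]]]]; exists (v1 :|: w).
  by rewrite subUset sub1 (subset_trans sub2) ?subsetDl.
split; last by rewrite -setDDl.
exists v1; rewrite ?subsetUl //; split=> //.
suff -> : (v1 :|: w) :\: v1 = w by [].
apply/setP=> r; rewrite !inE; case: (boolP (r \in w)) => [/(subsetP sub2)|].
  by rewrite inE orbT andbT => /andP[].
by rewrite orbF andNb.
Qed.

Lemma sepCA P Q R v : sep P (sep Q R) v -> sep Q (sep P R) v.
Proof. by move=> /sepA' H; apply: sepA; apply: (sep_monol H) => w /sepC. Qed.

Lemma sep_emp P v : sep P emp v <-> P v.
Proof.
split=> [[v1 sub1 [HP /esym/eqP]]|HP]; last by exists v; rewrite ?setDv.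
by rewrite setD_eq0 => sub2; rewrite -(eqP (_ : v1 == v)) // eqEsubset sub1.
Qed.

Section Lists.
Variables (T : Type) (f : T -> {set X} -> Prop).

Definition sep_list (l : seq T) : {set X} -> Prop := foldr (fun a => sep (f a)) emp l.

Lemma sep_list_cat l l' v : sep_list (l ++ l') v <-> sep (sep_list l) (sep_list l') v.
Proof.
elim: l v => [|a l IH] v /=.
  by split=> [H|/sepC/sep_emp //]; apply/sepC/sep_emp.
split=> [H|/sepA H]; first by apply: sepA'; apply: (sep_monor H) => w /IH.
by apply: (sep_monor H) => w /IH.
Qed.

End Lists.
End SeparatingConjunction.

Arguments emp {X}.

Lemma rtc_backward (A Bn : finType) (n : nat)
    (Rel : seq (satom A Bn n) -> seq (satom A Bn n) -> Prop) (Q : seq (satom A Bn n) -> Prop) :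
  (forall l l', Rel l l' -> Q l' -> Q l) -> forall l1 l2, rtc Rel l1 l2 -> Q l2 -> Q l1.
Proof. by move=> back l1 l2; elim=> // a b c /back + _ IH /IH. Qed.

Lemma all_enum_set (X : finType) (f : pred X) (T : {set X}) :
  all (fun t => f t == (t \in T)) (enum X) = ([set t | f t] == T).
Proof.
apply/allP/eqP => [H|<- t _]; last by rewrite inE.
by apply/setP => t; rewrite inE; apply/eqP/H; rewrite mem_enum.
Qed.

Lemma all_flatten_map (T S : Type) (a : pred S) (f : T -> seq S) l :
  all a (flatten (map f l)) = all (fun i => all a (f i)) l.
Proof. by elim: l => //= i l IH; rewrite all_cat IH. Qed.

Lemma foldl_map_star (U Bn : Type) (T : Type) (f : T -> form U Bn) g l :
  foldl FStar g (map f l) = foldl (fun acc a => FStar acc (f a)) g l.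
Proof. by elim: l g => //= a l IH g. Qed.

Section Environments.
Variables (U Bn D : finType).
Implicit Type I : interp U Bn D.

Definition ground_atom := ((U * D) + (Bn * D * D))%type.

Definition holds I (p : ground_atom) : bool :=
  match p with inl p => I.1 p | inr p => I.2 p end.

Lemma sat_foldl_star_first (T : Type) (f : T -> form U Bn) I s g l :
  sat I s (foldl (fun acc a => FStar acc (f a)) g l) -> exists I' : interp U Bn D, sat I' s g.
Proof.
elim: l I g => [|a l IH] I g /=; first by exists I.
by move/IH => [I' /existsP [I1 /existsP [I2 /and3P [_ H _]]]]; exists I1.
Qed.

Lemma split2_holds I I1 I2 : split2 I I1 I2 ->
  forall p, holds I p = holds I1 p || holds I2 p /\ ~~ (holds I1 p && holds I2 p).
Proof.
by case/andP => /forallP H1 /forallP H2 [p|p] /=;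
  [case/andP: (H1 p) | case/andP: (H2 p)] => /eqP ->.
Qed.

Definition restrict I (q : pred ground_atom) : interp U Bn D :=
  ([ffun p => I.1 p && q (inl p)], [ffun p => I.2 p && q (inr p)]).

Lemma holds_restrict I q p : holds (restrict I q) p = holds I p && q p.
Proof. by case: p => p /=; rewrite ffunE. Qed.

Lemma split2_restrict I q : split2 I (restrict I q) (restrict I (predC q)).
Proof.
by apply/andP; split; apply/forallP => p; rewrite /= !ffunE /=;
  [case: (I.1 p) | case: (I.2 p)]; case: (q _).
Qed.

End Environments.

Section Views.
Variables (A Bn : finType) (n : nat) (xs : n.-tuple nat) (x : nat).
Variables (D : finType) (s : nat -> D).
Hypothesis x_notin_xs : x \notin xs.

Local Notation U := (A + bool)%type.
Local Notation fm := (form U Bn).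
Local Notation env := (interp U Bn D).
Local Notation gatomT := (gatom A Bn n).
Local Notation xatomT := (xatom A Bn n).
Local Notation cell_type := ({set xatomT} * (bool * bool))%type.
Implicit Types (I : env) (T : {set xatomT}) (m : bool * bool) (d : D).

Lemma sat_bigAnd I s' l : sat I s' (bigAnd l) = all (sat I s') l.
Proof. by elim: l => //= g l ->. Qed.

Lemma sat_lit I s' b g : sat I s' (lit b g) = (sat I s' g == b).
Proof. by case: b => /=; case: (sat _ _ _). Qed.

Definition xval (i : 'I_n) : D := s (tnth xs i).
Definition xvals : {set D} := [set xval i | i : 'I_n].

Lemma notin_xvalsE d : (d \notin xvals) = all (fun i => d != xval i) (enum 'I_n).
Proof.
apply/idP/allP => [nx i _|dx]; first by apply: contra nx => /eqP ->; apply: imset_f.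
by apply/imsetP => -[i _ def_d]; move: (dx i); rewrite mem_enum def_d eqxx => /(_ isT).
Qed.

Lemma upd_x d : upd s x d x = d.
Proof. by rewrite /upd eqxx. Qed.

Lemma upd_xs d i : upd s x d (tnth xs i) = xval i.
Proof. by rewrite /upd; case: eqP => // def_x; move: x_notin_xs; rewrite -def_x mem_tnth. Qed.

(* An atom of the view: a [gatom] at the x_i, or an [xatom] or a mark [B_1]/[B_2]
   at an element d, which counts only when d is not the value of any x_i. *)
Definition vatom : finType := (gatomT + (D * (xatomT + bool)))%type.
Definition vgat (g : gatomT) : vatom := inl g.
Definition vxat d (t : xatomT) : vatom := inr (d, inl t).
Definition vmark d (b : bool) : vatom := inr (d, inr b).

Definition ground_of (r : vatom) : ground_atom U Bn D :=
  match r with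
  | inl (inl (a, i)) => inl (inl a, xval i)
  | inl (inr (f, i, j)) => inr (f, xval i, xval j)
  | inr (d, inl (inl a)) => inl (inl a, d)
  | inr (d, inl (inr (inl f))) => inr (f, d, d)
  | inr (d, inl (inr (inr (inl (f, i))))) => inr (f, d, xval i)
  | inr (d, inl (inr (inr (inr (f, i))))) => inr (f, xval i, d)
  | inr (d, inr b) => inl (inr b, d)
  end.

Definition vatom_valid (r : vatom) : bool :=
  if r is inr (d, _) then d \notin xvals else true.

Lemma vatom_valid_at d y : vatom_valid (inr (d, y)) = (d \notin xvals).
Proof. by []. Qed.

Definition view I : {set vatom} := [set r | vatom_valid r && holds I (ground_of r)].

Definition gpart (v : {set vatom}) : {set gatomT} := [set g | vgat g \in v].
Definition cell (v : {set vatom}) d : cell_type :=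
  ([set t | vxat d t \in v], (vmark d false \in v, vmark d true \in v)).
Definition blank : cell_type := (set0, (false, false)).

Definition icell I d : cell_type :=
  ([set t | holds I (ground_of (vxat d t))], (I.1 (inr false, d), I.1 (inr true, d))).

Lemma cell_view I d : cell (view I) d = if d \in xvals then blank else icell I d.
Proof.
rewrite /cell /icell; case: ifP => dx; congr (_, (_, _)); try apply/setP => t;
  by rewrite !inE vatom_valid_at dx.
Qed.

Lemma gpart_view I : gpart (view I) = [set g | holds I (ground_of (vgat g))].
Proof. by apply/setP => g; rewrite !inE. Qed.

Lemma sat_gatom_form I g : sat I s (gatom_form xs g) = holds I (ground_of (vgat g)).
Proof. by case: g => [[a i]|[[f i] j]]. Qed.

Lemma sat_xatom_form I d t : sat I (upd s x d) (xatom_form xs x t) = holds I (ground_of (vxat d t)).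
Proof. by case: t => [a|[f|[[f i]|[f i]]]] /=; rewrite ?upd_x ?upd_xs. Qed.

(* Through its negated literals x_i = x_j. *)
Lemma gccat_xval_inj I P : sat I s (gccat xs P) -> injective xval.
Proof.
rewrite /gccat sat_bigAnd all_cat => /andP [_]; rewrite all_map => /allP eqs i j eq_ij.
move: (eqs (i, j)); rewrite mem_enum => /(_ isT) /=; rewrite sat_lit /=.
by move: eq_ij; rewrite /xval => ->; rewrite eqxx => /eqP/esym/eqP.
Qed.

Lemma sat_delta I d : sat I (upd s x d) (delta A Bn xs x) = (d \notin xvals).
Proof.
by rewrite /delta sat_bigAnd all_map notin_xvalsE; apply: eq_all => i /=; rewrite upd_x upd_xs.
Qed.

Lemma sat_extf I d T : sat I (upd s x d) (extf xs x T) =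
   ([set t | holds I (ground_of (vxat d t))] == T) && (d \notin xvals).
Proof.
rewrite /extf sat_bigAnd all_cat all_map /= upd_x eqxx /= all_flatten_map notin_xvalsE.
congr andb; first by rewrite -all_enum_set; apply: eq_all => t /=; rewrite sat_lit sat_xatom_form.
by apply: eq_all => i /=; rewrite upd_x upd_xs andbT eq_sym andbb.
Qed.

Lemma sat_Mark I d m :
  sat I (upd s x d) (Mark A Bn x m) = ((I.1 (inr false, d), I.1 (inr true, d)) == m).
Proof. by case: m => b1 b2; rewrite /Mark /= !sat_lit /= upd_x xpair_eqE. Qed.

Lemma sat_extf_Mark I d T m :
  sat I (upd s x d) (extf xs x T) && sat I (upd s x d) (Mark A Bn x m) =
   (icell I d == (T, m)) && (d \notin xvals).
Proof.
rewrite sat_extf sat_Mark; case: m => b1 b2; rewrite /icell !xpair_eqE.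
by case: (_ == T); case: (_ \in _); case: (_ == b1); case: (_ == b2).
Qed.

Implicit Types (v w : {set vatom}) (P : {set gatomT}).

(* The view-level meaning of K(F), Any_m(T) and One_m(T): every element d outside
   the values of the x_i has a cell (its positive x-atoms and marks), and
   [occurrences v T m] are those whose cell is (T, m). *)
Definition Kview P v : Prop := gpart v = P /\ forall d, cell v d = blank.
Definition Anyview m T v : Prop :=
  gpart v = set0 /\ forall d, cell v d = blank \/ cell v d = (T, m) /\ d \notin xvals.
Definition occurrences v T m : {set D} := [set d | (d \notin xvals) && (cell v d == (T, m))].
Definition Oneview m T v : Prop := Anyview m T v /\ #|occurrences v T m| = 1.

Lemma Kview0 v : Kview set0 v <-> v = set0.
Proof.
split=> [[g0 c0]|->]; last first.
  split=> [|d]; first by apply/setP => g; rewrite !inE.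
  by rewrite /cell /blank !inE; congr pair; apply/setP => t; rewrite !inE.
apply/setP => -[g|[d [t|b]]]; rewrite inE; apply/negbTE.
- by move/setP: g0 => /(_ g); rewrite !inE => ->.
- by move: (c0 d) => [/setP /(_ t)]; rewrite !inE => ->.
- by move: (c0 d) => [_]; case: b => [_ ->|->].
Qed.

Lemma sep_Kview0 (Q : {set vatom} -> Prop) v : sep (Kview set0) Q v <-> Q v.
Proof.
split=> [[v1 _ [/Kview0 -> HQ]]|HQ]; first by rewrite setD0 in HQ.
by exists set0; rewrite ?sub0set ?setD0; split=> //; apply/Kview0.
Qed.

Lemma Oneview_Anyview m T v : Oneview m T v -> Anyview m T v.
Proof. by case. Qed.

Lemma Kview0_Anyview m T v : Kview set0 v -> Anyview m T v.
Proof. by case=> g0 c0; split=> // d; left. Qed.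

Lemma Anyview0 m T : Anyview m T set0.
Proof. by apply: Kview0_Anyview; apply/Kview0. Qed.

Lemma gpart_setD v w : w \subset v -> gpart v = gpart w :|: gpart (v :\: w).
Proof.
move=> sub_wv; apply/setP => g; rewrite !inE.
by case: (boolP (vgat g \in w)) => // /(subsetP sub_wv) ->.
Qed.

Definition cell_union (c c' : cell_type) : cell_type :=
  (c.1 :|: c'.1, (c.2.1 || c'.2.1, c.2.2 || c'.2.2)).

Lemma cell_setD v w d : w \subset v -> cell v d = cell_union (cell w d) (cell (v :\: w) d).
Proof.
move=> sub_wv; have inv r : (r \in v) = (r \in w) || (r \notin w) && (r \in v).
  by case: (boolP (r \in w)) => // /(subsetP sub_wv) ->.
by rewrite /cell /cell_union /=; congr (_, (_, _)); try apply/setP => t; rewrite !inE; apply: inv.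
Qed.

Lemma Anyview_sep_idem m T v : sep (Anyview m T) (Anyview m T) v -> Anyview m T v.
Proof.
case=> w sub_wv [[g1 c1] [g2 c2]]; split; first by rewrite (gpart_setD sub_wv) g1 g2 setU0.
move=> d; rewrite (cell_setD d sub_wv) /cell_union.
case: (c1 d) => [->|[-> dx]]; case: (c2 d) => [->|[-> dx']];
  rewrite /blank /= ?setU0 ?set0U ?setUid ?orbF ?orbb; first by left.
all: by right; case: (m) => ? ?.
Qed.

Lemma Anyview_sep_dup m T v : Anyview m T v -> sep (Anyview m T) (Anyview m T) v.
Proof. by move=> Av; exists v; rewrite ?subxx ?setDv //; split=> //; apply: Anyview0. Qed.

Definition vfilter (pg : pred gatomT) (pt : pred xatomT) (pb : pred bool) v : {set vatom} :=
  [set r in v | match r with inl g => pg g | inr (_, inl t) => pt t | inr (_, inr b) => pb b end].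

Lemma vfilter_sub pg pt pb v : vfilter pg pt pb v \subset v.
Proof. by apply/subsetP => r; rewrite inE => /andP []. Qed.

Lemma setD_vfilter pg pt pb v :
  v :\: vfilter pg pt pb v = vfilter (predC pg) (predC pt) (predC pb) v.
Proof.
apply/setP => r; rewrite !inE.
by case: r => [g|[d [t|b]]] /=; case: (_ \in v); rewrite ?andbF ?andbT.
Qed.

Lemma gpart_vfilter pg pt pb v : gpart (vfilter pg pt pb v) = [set g in gpart v | pg g].
Proof. by apply/setP => g; rewrite !inE. Qed.

Lemma cell_vfilter pg pt pb v d : cell (vfilter pg pt pb v) d =
  ([set t in (cell v d).1 | pt t], ((cell v d).2.1 && pb false, (cell v d).2.2 && pb true)).
Proof. by rewrite /cell !inE /=; congr pair; apply/setP => t; rewrite !inE. Qed.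

Section Split12.
Variables (T1 T2 : {set xatomT}) (v : {set vatom}).
Hypotheses (T12_disj : [disjoint T1 & T2]) (Any12 : Anyview m12 (T1 :|: T2) v).

(* [negb] keeps the mark B_1, which is encoded as [inr false]. *)
Definition part1 : {set vatom} := vfilter pred0 (mem T1) negb v.

Lemma gpart_part12 : gpart part1 = set0 /\ gpart (v :\: part1) = set0.
Proof.
by rewrite setD_vfilter !gpart_vfilter (proj1 Any12); split; apply/setP => g; rewrite !inE.
Qed.

Lemma cell_part12 d :
  cell v d = blank /\ cell part1 d = blank /\ cell (v :\: part1) d = blank \/
  [/\ cell v d = (T1 :|: T2, m12), cell part1 d = (T1, m1),
      cell (v :\: part1) d = (T2, m2) & d \notin xvals].
Proof.
rewrite /part1 setD_vfilter !cell_vfilter.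
case: (proj2 Any12 d) => [->|[-> dx]]; [left|right]; rewrite /blank /=.
  by split; last split; congr pair; apply/setP => t; rewrite !inE.
split=> //; congr (_, _); apply/setP => t; rewrite !inE;
  by case: (boolP (t \in T1)) => [/(disjointFr T12_disj) ->|]; rewrite ?andbT ?andbF.
Qed.

Lemma Anyview_part12 : Anyview m1 T1 part1 /\ Anyview m2 T2 (v :\: part1).
Proof.
have [g1 g2] := gpart_part12.
split; split=> // d; case: (cell_part12 d) => [[_ [c1 c2]]|[_ c1 c2 dx]];
  rewrite ?c1 ?c2; by [left|right].
Qed.

Lemma occurrences_part12 :
  occurrences part1 T1 m1 = occurrences v (T1 :|: T2) m12 /\
  occurrences (v :\: part1) T2 m2 = occurrences v (T1 :|: T2) m12.
Proof.
split; apply/setP => d; rewrite !inE;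
  case: (cell_part12 d) => [[c [c1 c2]]|[c c1 c2 _]];
  by rewrite ?c ?c1 ?c2 ?eqxx // !xpair_eqE /= !andbF.
Qed.

Lemma Anyview12_sep : sep (Anyview m1 T1) (Anyview m2 T2) v.
Proof. by exists part1; [apply: vfilter_sub | apply: Anyview_part12]. Qed.

Lemma Oneview12_sep : #|occurrences v (T1 :|: T2) m12| = 1 ->
  sep (Oneview m1 T1) (Oneview m2 T2) v.
Proof.
have [A1 A2] := Anyview_part12; have [o1 o2] := occurrences_part12.
by exists part1; rewrite ?vfilter_sub // /Oneview o1 o2.
Qed.

End Split12.

Lemma Kview_sepU P1 P2 v : [disjoint P1 & P2] -> Kview (P1 :|: P2) v -> sep (Kview P1) (Kview P2) v.
Proof.
move=> P12_disj [gv cv]; exists (vfilter (mem P1) pred0 pred0 v); first exact: vfilter_sub.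
have cell0 pg pt pb d : cell (vfilter pg pt pb v) d = blank.
  by rewrite cell_vfilter cv /blank /=; congr pair; apply/setP => t; rewrite !inE.
split; split=> [|d]; rewrite ?setD_vfilter ?cell0 // gpart_vfilter gv.
all: apply/setP => g; rewrite !inE.
  by case: (g \in P1); rewrite ?andbF.
by case: (boolP (g \in P1)) => [/(disjointFr P12_disj) ->|]; rewrite ?andbT ?andbF.
Qed.

Section Absorption.
Variables (m : bool * bool) (T : {set xatomT}) (Q : {set vatom} -> Prop).

Lemma sep_Any_Any_absorb v : sep (Anyview m T) (sep (Anyview m T) Q) v -> sep (Anyview m T) Q v.
Proof. by move=> /sepA' H; apply: (sep_monol H) => w /Anyview_sep_idem. Qed.

Lemma sep_One_Any_absorb v : sep (Oneview m T) (sep (Anyview m T) Q) v -> sep (Anyview m T) Q v.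
Proof. by move=> H; apply: sep_Any_Any_absorb; apply: (sep_monol H) => w /Oneview_Anyview. Qed.

Lemma sep_Any_One_absorb v : sep (Anyview m T) (sep (Oneview m T) Q) v -> sep (Anyview m T) Q v.
Proof.
move=> H; apply: sep_Any_Any_absorb; apply: (sep_monor H) => w /sep_monol.
by apply=> u /Oneview_Anyview.
Qed.

End Absorption.

Definition satom_view (a : satom A Bn n) : {set vatom} -> Prop :=
  match a with SOne m T => Oneview m T | SAny m T => Anyview m T | SGE => Kview set0 end.

Local Notation Wview := (sep_list satom_view).

Lemma rule14_sound lhs rhs r v : rule14 lhs rhs -> Wview (rhs ++ r) v -> Wview (lhs ++ r) v.
Proof.
case=> T1 [T2 [T12_disj rules]].
have One12 w : Oneview m12 (T1 :|: T2) w -> sep (Oneview m1 T1) (Oneview m2 T2) w.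
  by case; apply: Oneview12_sep.
have Any12 w : Anyview m12 (T1 :|: T2) w -> sep (Anyview m1 T1) (Anyview m2 T2) w.
  exact: Anyview12_sep.
case: rules => [[-> ->]|[[-> ->]|[[-> ->]|[-> ->]]]] /= H.
- exact: sepA (sep_monol H One12).
- by apply: (sep_monor (sepA (sep_monol H One12))) => w; apply: sep_One_Any_absorb.
- by apply: sep_Any_One_absorb; apply: (sep_monor H) => w Hw; apply: sepA (sep_monol Hw One12).
- apply: sep_Any_Any_absorb; apply: (sep_monor H) => w Hw; apply: sepCA.
  apply: sep_Any_Any_absorb; apply: (sep_monor Hw) => u Hu; apply: sepCA.
  exact: sepA (sep_monol Hu Any12).
Qed.

Lemma rule56_sound lhs rhs r v : rule56 lhs rhs -> Wview (rhs ++ r) v -> Wview (lhs ++ r) v.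
Proof. by case=> T [[->|->] ->] /= H; apply: (sep_monol H) => w; apply: Kview0_Anyview. Qed.

Lemma equiv_step_sound l l' v : equiv_step l l' -> Wview l' v -> Wview l v.
Proof.
case=> [[l1 [a [b [l2 [-> ->]]]]]|[->|[->|[[m [T [r [-> ->]]]]|[m [T [r [-> ->]]]]]]]] /=.
- by move/sep_list_cat => H; apply/sep_list_cat; apply: (sep_monor H) => w /sepCA.
- by move/sep_Kview0.
- by move=> H; apply/sep_Kview0.
- exact: sep_Any_Any_absorb.
- by move=> H; apply: sepA; apply: (sep_monol H); apply: Anyview_sep_dup.
Qed.

Definition unfolded_view m (c : {ffun {set xatomT} -> cval}) : {set vatom} -> Prop :=
  Wview (flatten [seq unfoldX m T (c T) | T <- enum {set xatomT}]).

Lemma derivation_view_sound P1 P2 (s1 s2 : {ffun {set xatomT} -> cval}) W1 W2 v :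
  [disjoint P1 & P2] ->
  rtc (fun l l' => equiv_step l l' \/ rewr (@rule14 A Bn n) l l') (W0 s1 s2) W1 ->
  rtc (fun l l' => equiv_step l l' \/ rewr (@rule56 A Bn n) l l') W1 W2 ->
  sep (Kview (P1 :|: P2)) (Wview W2) v ->
  sep (sep (Kview P1) (unfolded_view m1 s1)) (sep (Kview P2) (unfolded_view m2 s2)) v.
Proof.
move=> P12_disj der14 der56 H.
have W21 w : Wview W2 w -> Wview W1 w.
  apply: (rtc_backward (Q := fun l => Wview l w)) der56 => l l' [|[lhs [rhs [r [+ [-> ->]]]]]].
    exact: equiv_step_sound.
  exact: rule56_sound.
have W10 w : Wview W1 w -> Wview (W0 s1 s2) w.
  apply: (rtc_backward (Q := fun l => Wview l w)) der14 => l l' [|[lhs [rhs [r [+ [-> ->]]]]]].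
    exact: equiv_step_sound.
  exact: rule14_sound.
have {}H : sep (Kview (P1 :|: P2)) (sep (unfolded_view m1 s1) (unfolded_view m2 s2)) v.
  by apply: (sep_monor H) => w /W21/W10/sep_list_cat.
have {}H := sepA (sep_monol H (fun w => Kview_sepU P12_disj)).
by apply: sepA'; apply: (sep_monor H) => w /sepCA.
Qed.

Section Injective.
Hypothesis xval_inj : injective xval.

Lemma ground_of_inj r r' : vatom_valid r -> vatom_valid r' -> ground_of r = ground_of r' -> r = r'.
Proof.
have xvalsF d i : d \notin xvals -> d = xval i -> False.
  by move=> /negP dx def_d; apply: dx; rewrite def_d imset_f.
case: r => [[[a i]|[[f i] j]]|[d [[a|[f|[[f i]|[f i]]]]|b]]];
case: r' => [[[a' i']|[[f' i'] j']]|[d' [[a'|[f'|[[f' i']|[f' i']]]]|b']]] //= V V' [];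
repeat (move=> /xval_inj ? || move=> ?); subst => //; exfalso;
  first [ by apply: (xvalsF _ _ V) | by apply: (xvalsF _ _ V') ].
Qed.

Lemma sat_gccat I P : sat I s (gccat xs P) = (gpart (view I) == P).
Proof.
rewrite /gccat sat_bigAnd all_cat !all_map gpart_view -all_enum_set.
rewrite [X in _ && X](_ : _ = true); last first.
  apply/allP => ij _ /=; rewrite sat_lit /=.
  by have := inj_eq xval_inj ij.1 ij.2; rewrite /xval => ->; rewrite eqxx.
by rewrite andbT -enumT; apply: eq_all => t /=; rewrite sat_lit sat_gatom_form.
Qed.

(* Otherwise [/=] would unfold these builders under [sat] and hide the shapes
   that [sat_extf_Mark] and [sat_delta] rewrite. *)
Opaque Mark extf delta gccat.

Lemma sat_Kf I P : sat I s (Kf xs x P) <-> Kview P (view I).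
Proof.
rewrite /Kf /= sat_gccat; split.
- case/andP => /eqP gv /forallP cI; split=> // d; rewrite cell_view; case: ifP => // dx.
  by move: (cI d); rewrite /= sat_delta sat_extf_Mark dx andbT => /eqP.
- case=> gv cv; apply/andP; split; first exact/eqP.
  apply/forallP => d /=; rewrite sat_delta sat_extf_Mark; apply/implyP => dx.
  by move: (cv d); rewrite cell_view (negbTE dx) => ->; rewrite eqxx.
Qed.

Lemma sat_Anyf I m T : sat I s (Anyf xs x m T) <-> Anyview m T (view I).
Proof.
rewrite /Anyf /= sat_gccat; split.
- case/andP => /eqP gv /forallP cI; split=> // d; rewrite cell_view; case: ifP => dx; first by left.
  move: (cI d); rewrite /= sat_delta !sat_extf_Mark dx /= !andbT.
  by case/orP => /eqP ->; [right | left].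
- case=> gv cv; apply/andP; split; first exact/eqP.
  apply/forallP => d /=; rewrite sat_delta !sat_extf_Mark; apply/implyP => dx.
  by move: (cv d); rewrite cell_view (negbTE dx) => -[->|[-> _]]; rewrite eqxx ?orbT.
Qed.

Lemma sat_Onef I m T : sat I s (Onef xs x m T) <-> Oneview m T (view I).
Proof.
rewrite /Onef /=; have /= AnyE := sat_Anyf I m T.
have -> : [set d | sat I (upd s x d) (FAnd (delta A Bn xs x) (FAnd (extf xs x T) (Mark A Bn x m)))]
    = occurrences (view I) T m.
  apply/setP => d; rewrite !inE /= sat_delta sat_extf_Mark cell_view.
  by case: (d \in xvals); rewrite //= andbT.
split; first by case/andP => /AnyE ? /eqP.
by case=> /AnyE -> ->.
Qed.

Definition denotes (g : fm) (V : {set vatom} -> Prop) : Prop :=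
  forall I, sat I s g <-> V (view I).

Lemma denotes_ext g V V' : denotes g V -> (forall v, V v <-> V' v) -> denotes g V'.
Proof. by move=> gV VV' I; split=> [/gV/VV'|/VV'/gV]. Qed.

Definition selected v (p : ground_atom U Bn D) : bool :=
  [exists r, (r \in v) && (ground_of r == p)].

Lemma selected_ground_of I v r :
  v \subset view I -> vatom_valid r -> selected v (ground_of r) = (r \in v).
Proof.
move=> sub_v r_ok; apply/existsP/idP => [[r' /andP [r'v /eqP eq_r]]|rv].
  move: (subsetP sub_v r' r'v); rewrite inE => /andP [r'_ok _].
  by rewrite -(ground_of_inj r'_ok r_ok eq_r).
by exists r; rewrite rv eqxx.
Qed.

(* Any subset of the view is the view of a part of a split. *)
Lemma view_restrict I v : v \subset view I ->
  view (restrict I (selected v)) = v /\ view (restrict I (predC (selected v))) = view I :\: v.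
Proof.
move=> sub_v; have v_ok r : r \in v -> vatom_valid r && holds I (ground_of r).
  by move/(subsetP sub_v); rewrite inE.
split; apply/setP => r; rewrite !inE holds_restrict.
  case r_ok: (vatom_valid r); last by case rv: (r \in v) => //; move: (v_ok r rv); rewrite r_ok.
  rewrite (selected_ground_of sub_v r_ok) /=.
  by case rv: (r \in v); rewrite ?andbF ?andbT //; move: (v_ok r rv); rewrite r_ok.
case r_ok: (vatom_valid r); rewrite ?andbF //=.
by rewrite (selected_ground_of sub_v r_ok) andbC.
Qed.

Lemma denotes_FStar g h V V' : denotes g V -> denotes h V' -> denotes (FStar g h) (sep V V').
Proof.
move=> gV hV' I; split.
- case/existsP => I1 /existsP [I2 /and3P [split_I /gV V1 /hV' V2]].
  have hI := split2_holds split_I.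
  exists (view I1).
    by apply/subsetP => r; rewrite !inE => /andP [-> /=]; rewrite (proj1 (hI _)) => ->.
  suff -> : view I :\: view I1 = view I2 by [].
  apply/setP => r; rewrite !inE; case: (vatom_valid r) => //=.
  by case: (hI (ground_of r)) => ->; case: (holds I1 _); case: (holds I2 _).
- case=> v1 sub_v1 [V1 V2]; have [E1 E2] := view_restrict sub_v1.
  apply/existsP; exists (restrict I (selected v1)).
  apply/existsP; exists (restrict I (predC (selected v1))).
  rewrite split2_restrict; apply/and3P; split=> //.
    by apply/gV; rewrite E1.
  by apply/hV'; rewrite E2.
Qed.

Lemma denotes_foldl_star (T : Type) (f : T -> fm) (sub : T -> seq (satom A Bn n)) l g V :
  (forall a, denotes (f a) (Wview (sub a))) -> denotes g V ->
  denotes (foldl (fun acc a => FStar acc (f a)) g l) (sep V (Wview (flatten (map sub l)))).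
Proof.
move=> fW; elim: l g V => [|a l IH] g V gV /=.
  by apply: denotes_ext gV _ => v; apply: iff_sym; apply: sep_emp.
apply: denotes_ext (IH _ _ (denotes_FStar gV (fW a))) _ => v; split=> [/sepA|] H.
  by apply: (sep_monor H) => w /sep_list_cat.
by apply: sepA'; apply: (sep_monor H) => w /sep_list_cat.
Qed.

Lemma Wview_dropGE l l' v : Wview (l ++ @SGE A Bn n :: l') v <-> Wview (l ++ l') v.
Proof.
split=> /sep_list_cat H; apply/sep_list_cat; apply: (sep_monor H) => w; first by move/sep_Kview0.
by move=> Hw; apply/sep_Kview0.
Qed.

Lemma denotes_Xn m T k : denotes (Xn xs x m T k) (Wview (nseq k (SOne m T))).
Proof.
elim: k => [|k IH] /=; last exact: denotes_FStar (fun I => sat_Onef I m T) IH.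
by apply: denotes_ext (fun I => sat_Kf I set0) _ => v; split=> [/Kview0 ->|<-] //; apply/Kview0.
Qed.

Lemma denotes_Xf m T c : denotes (Xf xs x m T c) (Wview (unfoldX m T c)).
Proof.
case: c => [k|p] /=.
  apply: denotes_ext (denotes_Xn m T k) _ => v.
  by rewrite -{1}(cats0 (nseq k _)); apply: iff_sym; apply: Wview_dropGE.
apply: denotes_ext (denotes_FStar (denotes_Xn m T p) (fun I => sat_Anyf I m T)) _ => v.
split=> [H|/Wview_dropGE/sep_list_cat H].
  by apply/Wview_dropGE/sep_list_cat; apply: (sep_monor H) => w Hw; apply/sep_emp.
by apply: (sep_monor H) => w /sep_emp.
Qed.

Lemma denotes_satom a : denotes (satom_form xs x a) (Wview [:: a]).
Proof.
have emp_r g V : denotes g V -> denotes g (sep V emp).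
  by move=> gV; apply: denotes_ext gV _ => v; apply: iff_sym; apply: sep_emp.
by case: a => [m T|m T|] /=; apply: emp_r => I; [apply: sat_Onef | apply: sat_Anyf | apply: sat_Kf].
Qed.

Definition eqs_hold (E : seq (nat * 'I_n)) : bool := all (fun p => s p.1 == s (tnth xs p.2)) E.

Lemma sat_Eform I E : sat I s (Eform A Bn xs E) = eqs_hold E.
Proof. by rewrite /Eform sat_bigAnd all_map. Qed.

Lemma denotes_Eform_and E g V :
  denotes g V -> denotes (FAnd (Eform A Bn xs E) g) (fun v => eqs_hold E /\ V v).
Proof. by move=> gV I /=; rewrite sat_Eform; split=> [/andP [-> /gV] // | [-> /gV ->]]. Qed.

Lemma denotes_Sf m E P (c : {ffun {set xatomT} -> cval}) :
  denotes (Sf xs x m E P c) (fun v => eqs_hold E /\ sep (Kview P) (unfolded_view m c) v).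
Proof.
apply: denotes_Eform_and; rewrite foldl_map_star.
exact: denotes_foldl_star (fun T => denotes_Xf m T (c T)) (fun I => sat_Kf I P).
Qed.

Lemma derivation_sound E P1 P2 (s1 s2 : {ffun {set xatomT} -> cval}) W1 W2 I :
  [disjoint P1 & P2] ->
  rtc (fun l l' => equiv_step l l' \/ rewr (@rule14 A Bn n) l l') (W0 s1 s2) W1 ->
  rtc (fun l l' => equiv_step l l' \/ rewr (@rule56 A Bn n) l l') W1 W2 ->
  sat I s (FAnd (Eform A Bn xs E)
                (foldl (fun acc a => FStar acc (satom_form xs x a)) (Kf xs x (P1 :|: P2)) W2)) ->
  sat I s (FStar (Sf xs x m1 E P1 s1) (Sf xs x m2 E P2 s2)).
Proof.
move=> P12_disj der14 der56.
have denR := denotes_Eform_and E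
  (denotes_foldl_star W2 denotes_satom (fun I => sat_Kf I (P1 :|: P2))).
move/denR => [eqsE HW]; rewrite flatten_map1 map_id in HW.
apply/(denotes_FStar (denotes_Sf _ _ _ _) (denotes_Sf _ _ _ _)).
by apply: sep_mono (derivation_view_sound P12_disj der14 der56 HW) => w Hw.
Qed.

End Injective.
End Views.

Theorem lemma16 (A Bn : finType) (n : nat) (xs : n.-tuple nat) (x : nat)
  (E : seq (nat * 'I_n))
  (P1 P2 : {set gatom A Bn n}) (q1 q2 : nat)
  (s1 s2 : {ffun {set xatom A Bn n} -> cval}) (R : form (A + bool) Bn) :
  uniq xs -> x \notin xs ->
  uniq [seq p.1 | p <- E] -> (forall p, p \in E -> p.1 \notin x :: xs) ->
  2 <= q1 -> (forall T, in_Cq q1 (s1 T)) ->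
  2 <= q2 -> (forall T, in_Cq q2 (s2 T)) ->
  derivation_result xs x E P1 s1 P2 s2 R ->
  valid (FImp R (FStar (Sf xs x (true, false) E P1 s1)
                       (Sf xs x (false, true) E P2 s2))).
Proof.
(* Distinctness of the values of the x_i comes from the GCCAT part of the K-conjunct. *)
move=> _ x_notin_xs _ _ _ _ _ _ [W1 [W2 [der14 [der56 [_ ->]]]]] D _ I s.
apply/implyP => satR; have /andP [_ satK] := satR.
have [I' satK'] := sat_foldl_star_first satK.
move: satK' satR; rewrite /otimes; case: ifP => // P12_disj satK' satR.
have xval_inj := gccat_xval_inj (proj1 (andP satK')).
exact: (derivation_sound x_notin_xs xval_inj P12_disj der14 der56 satR).
Qed.
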